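(* Consider full-batch Noisy-SGD ($\mathcal{B}_t=\mathcal{B}_t'=[n]$) on adjacent datasets $\mathcal{D},\mathcal{D}'$ with iterates $W_t,W_t'$ and $W_0=W_0'$. Assume $\nabla\ell_i,\nabla\ell_i'$ are $(L,\lambda)$-Hölder continuous on $\mathcal{K}$ for all $i\in[n]$, with $L\ge0$, $\lambda\in(0,1]$. Let $g(x;M)=x+Mx^\lambda$. Then for all $t\ge0$, $$W_\infty(W_t,W_t')\le\min(D_t,D),\qquad D_t=\min\big(g(D_{t-1};\eta L)+2\eta K/n,\ D_{t-1}+2\eta K\big),\quad D_0=0.$$
   Context: Setting (Noisy-SGD). Let $\mathcal{K}\subset\mathbb{R}^d$ be a nonempty closed convex set of diameter $D$, $\Pi_{\mathcal{K}}$ the Euclidean projection. Let $\ell(\cdot;d)$, $d\in\mathcal{X}$, be differentiable losses on $\mathcal{K}$; for $\mathcal{D}=(d_1,\dots,d_n)$ write $\ell_i=\ell(\cdot;d_i)$, and $\ell_i'=\ell(\cdot;d_i')$ for $\mathcal{D}'$. $\Pi_{B_K}(v)=v\min(1,K/\|v\|)$. Noisy-SGD: $W_{t+1}=\Pi_{\mathcal{K}}\big[W_t-\eta\frac1b\sum_{i\in\mathcal{B}_t}\Pi_{B_K}[\nabla\ell_i(W_t)]+G_t\big]$, $G_t$ i.i.d. $N(0,\sigma^2I_d)$; $W_t'$ analogously on $\mathcal{D}'$. Adjacent datasets differ in exactly one index. $(L,\lambda)$-Hölder: $\|f(w)-f(w')\|\le L\|w-w'\|^\lambda$. $W_\infty(\mu,\nu)=\inf_{\gamma\in\Gamma(\mu,\nu)}\operatorname{ess\,sup}_{(X,Y)\sim\gamma}\|X-Y\|$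 over couplings, applied to the laws of $W_t,W_t'$. *)

(* Euclidean space R^d is modelled as d.-tuple R,
   which carries the product (Borel) sigma-algebra of mathcomp-analysis. *)
From HB Require Import structures.
From mathcomp Require Import all_boot all_order all_algebra.
From mathcomp Require Import all_classical all_reals all_analysis.
From mathcomp Require Import ess_sup_inf.
Set Implicit Arguments. Unset Strict Implicit. Unset Printing Implicit Defensive.
Import Order.TTheory GRing.Theory Num.Theory.
Local Open Scope classical_set_scope.
Local Open Scope ring_scope.

Section Vec.
Variables (R : realType) (d : nat).
Definition Vec := d.-tuple R.
Definition vadd (u v : Vec) : Vec := [tuple tnth u i + tnth v i | i < d].
Definition vsub (u v : Vec) : Vec := [tuple tnth u i - tnth v i | i < d].
Definition vscale (a : R) (v : Vec) : Vec := [tuple a * tnth v i | i < d].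
Definition vzero : Vec := [tuple 0 | i < d].
Definition vdot (u v : Vec) : R := \sum_(i < d) tnth u i * tnth v i.
Definition vnorm (v : Vec) : R := Num.sqrt (vdot v v).
Definition vdist (u v : Vec) : R := vnorm (vsub u v).

(* Pi_{B_K}(v) = v * min(1, K/||v||)  (for v = 0 this gives 0) *)
Definition clipB (C : R) (v : Vec) : Vec := vscale (Num.min 1 (C / vnorm v)) v.

Definition closed_vset (K : set Vec) : Prop :=
  forall x, (forall e, 0 < e -> exists2 y, K y & vdist x y < e) -> K x.
Definition convex_vset (K : set Vec) : Prop :=
  forall x y a, K x -> K y -> 0 <= a <= 1 ->
    K (vadd (vscale a x) (vscale (1 - a) y)).
Definition is_diameter (K : set Vec) (D : R) : Prop :=
  (forall x y, K x -> K y -> vdist x y <= D) /\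
  (forall e, 0 < e -> exists x y, [/\ K x, K y & D - e < vdist x y]).
Definition is_proj (K : set Vec) (x p : Vec) : Prop :=
  K p /\ forall y, K y -> vdist x p <= vdist x y.

Definition has_gradient_at (f : Vec -> R) (w g : Vec) : Prop :=
  forall e, 0 < e -> exists2 del, 0 < del & forall h, vnorm h < del ->
    `|f (vadd w h) - f w - vdot g h| <= e * vnorm h.

Definition holder_on (K : set Vec) (L lam : R) (f : Vec -> Vec) : Prop :=
  forall w w', K w -> K w' -> vdist (f w) (f w') <= L * (vdist w w') `^ lam.
End Vec.

Definition gfun (R : realType) (lam M x : R) : R := x + M * x `^ lam.

Fixpoint Dseq (R : realType) (lam eta L C : R) (n : nat) (t : nat) : R :=
  match t with
  | 0 => 0
  | t'.+1 => Num.min (gfun lam (eta * L) (Dseq lam eta L C n t') + 2 * eta * C / n%:R)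
                     (Dseq lam eta L C n t' + 2 * eta * C)
  end.

Fixpoint noisy_sgd (R : realType) (d n : nat) (T : Type)
    (proj : Vec R d -> Vec R d) (grads : 'I_n -> Vec R d -> Vec R d)
    (eta C : R) (G : nat -> T -> Vec R d) (w0 : Vec R d) (t : nat) (om : T)
    : Vec R d :=
  match t with
  | 0 => w0
  | t'.+1 =>
      let w := noisy_sgd proj grads eta C G w0 t' om in
      proj (vadd (vsub w (vscale (eta / n%:R)
                   (\big[@vadd R d / vzero R d]_(i < n) clipB C (grads i w))))
                 (G t' om))
  end.

Definition mutually_independent (dO : measure_display) (T : measurableType dO)
    (R : realType) (P : probability T R) (I : eqType) (Xs : I -> T -> R) : Prop :=
  forall (S : seq I) (B : I -> set R), uniq S -> (forall i, measurable (B i)) ->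
    P (\bigcap_(i in [set` S]) (Xs i @^-1` B i)) =
    (\prod_(i <- S) P (Xs i @^-1` B i))%E.

(* G_t, t in nat, i.i.d. N(0, sigma^2 I_d): all coordinates (t,i) are
   independent real N(0, sigma^2) random variables. *)
Definition iid_gaussian_noise (dO : measure_display) (T : measurableType dO)
    (R : realType) (d : nat) (P : probability T R) (sigma : R)
    (G : nat -> T -> Vec R d) : Prop :=
  let coord := fun (ti : nat * 'I_d) (om : T) => tnth (G ti.1 om) ti.2 in
  [/\ forall ti, measurable_fun [set: T] (coord ti),
      forall ti B, measurable B -> P (coord ti @^-1` B) = normal_prob 0 sigma B
    & mutually_independent P coord].

Definition is_coupling (R : realType) (d : nat) (mu nu : set (Vec R d) -> \bar R)
    (g : probability (Vec R d * Vec R d)%type R) : Prop :=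
  forall A, measurable A -> g (A `*` setT) = mu A /\ g (setT `*` A) = nu A.

Definition W_infty (R : realType) (d : nat) (mu nu : set (Vec R d) -> \bar R) : \bar R :=
  ereal_inf [set ess_sup g (fun z => (vdist z.1 z.2)%:E) | g in is_coupling mu nu].

From HB Require Import structures.
From mathcomp Require Import all_boot all_order all_algebra.
From mathcomp Require Import all_classical all_reals all_analysis.
From mathcomp Require Import ess_sup_inf measurable_realfun.
From mathcomp Require Import ring lra.
Import Order.TTheory GRing.Theory Num.Theory.
Local Open Scope classical_set_scope.
Local Open Scope ring_scope.

Set Implicit Arguments. Unset Strict Implicit. Unset Printing Implicit Defensive.

(* Couple the two runs synchronously, driving both with the same noise G.
   Projection onto K and clipping to the ball B_C are metric projections onto
   convex sets, hence nonexpansive, and only the j-th of the n clipped gradients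
   can differ by more than the Hoelder modulus; so the distance of the coupled
   iterates obeys the recursion defining D_t pointwise, and it is at most D once
   both iterates lie in K.
   This is a coupling of the two laws in the statement because an iterate is a
   measurable function of the first t noise vectors, whose joint law is fixed by
   the i.i.d. Gaussian hypothesis: it is determined on boxes, a pi-system
   generating the product sigma-algebra. Measurability of the iterates, whose
   step involves an arbitrary projection map, comes from continuity: a jointly
   continuous function of measurable maps is the pointwise limit of its values at
   grid roundings, which factor through a countable set. *)

Section Euclid.
Variables (R : realType) (d : nat).
Implicit Types (u v w x y p q : Vec R d) (r : R).

Lemma tnth_vadd u v i : tnth (vadd u v) i = tnth u i + tnth v i.
Proof. exact: tnth_mktuple. Qed.

Lemma tnth_vsub u v i : tnth (vsub u v) i = tnth u i - tnth v i.
Proof. exact: tnth_mktuple. Qed.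

Lemma tnth_vscale r v i : tnth (vscale r v) i = r * tnth v i.
Proof. exact: tnth_mktuple. Qed.

Lemma tnth_vzero i : tnth (vzero R d) i = 0.
Proof. exact: tnth_mktuple. Qed.

Definition tnth_vE := (tnth_vadd, tnth_vsub, tnth_vscale, tnth_vzero).

Lemma vdot_ge0 v : 0 <= vdot v v.
Proof. by apply: sumr_ge0 => i _; rewrite -expr2 sqr_ge0. Qed.

Lemma vnorm_ge0 v : 0 <= vnorm v.
Proof. exact: sqrtr_ge0. Qed.

Lemma vdist_ge0 u v : 0 <= vdist u v.
Proof. exact: vnorm_ge0. Qed.

Lemma sqr_vnorm v : vnorm v ^+ 2 = vdot v v.
Proof. by rewrite sqr_sqrtr // vdot_ge0. Qed.

Lemma vnorm_le r v : 0 <= r -> vdot v v <= r ^+ 2 -> vnorm v <= r.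
Proof. by move=> r0 h; rewrite -(ger0_norm r0) -sqrtr_sqr ler_sqrt ?sqr_ge0. Qed.

Lemma vnorm_lt r v : 0 < r -> vdot v v < r ^+ 2 -> vnorm v < r.
Proof.
by move=> r0 h; rewrite -(gtr0_norm r0) -sqrtr_sqr ltr_sqrt ?exprn_gt0 ?normr_gt0 ?gt_eqF.
Qed.

Lemma vdot_eq0 v : vdot v v = 0 -> v = vzero R d.
Proof.
move/eqP; rewrite psumr_eq0 => [/allP vv0|i _]; last by rewrite -expr2 sqr_ge0.
apply: eq_from_tnth => i; rewrite tnth_vzero.
by have := vv0 i (mem_index_enum _); rewrite /= mulf_eq0 orbb => /eqP.
Qed.

Lemma vdot_lincomb r1 r2 u v :
  vdot (vadd (vscale r1 u) (vscale r2 v)) (vadd (vscale r1 u) (vscale r2 v)) =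
  r1 ^+ 2 * vdot u u + 2 * r1 * r2 * vdot u v + r2 ^+ 2 * vdot v v.
Proof.
rewrite /vdot !mulr_sumr -!big_split.
by apply: eq_bigr => i _; rewrite /= !tnth_vE; ring.
Qed.

Lemma vdot_cauchy_schwarz u v : vdot u v <= vnorm u * vnorm v.
Proof.
have sqr_vdot_le : vdot u v ^+ 2 <= vdot u u * vdot v v.
  have [v0|v_neq0] := eqVneq (vdot v v) 0.
    rewrite v0 mulr0 (vdot_eq0 v0) /vdot big1 ?expr0n // => i _.
    by rewrite tnth_vzero mulr0.
  have v_gt0 : 0 < vdot v v by rewrite lt_def v_neq0 vdot_ge0.
  have := vdot_ge0 (vadd (vscale (vdot v v) u) (vscale (- vdot u v) v)).
  rewrite vdot_lincomb.
  rewrite (_ : _ + _ + _ = vdot v v * (vdot u u * vdot v v - vdot u v ^+ 2)); last by ring.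
  by rewrite pmulr_rge0 // subr_ge0.
rewrite /vnorm -sqrtrM ?vdot_ge0 //; apply: le_trans (ler_norm _) _.
by rewrite -sqrtr_sqr ler_sqrt ?mulr_ge0 ?vdot_ge0.
Qed.

Lemma vnormD u v : vnorm (vadd u v) <= vnorm u + vnorm v.
Proof.
apply: vnorm_le; first by rewrite addr_ge0 ?vnorm_ge0.
have -> : vadd u v = vadd (vscale 1 u) (vscale 1 v).
  by apply: eq_from_tnth => i; rewrite !tnth_vE !mul1r.
rewrite vdot_lincomb -!sqr_vnorm; have := vdot_cauchy_schwarz u v; nra.
Qed.

Lemma vnormZ r v : vnorm (vscale r v) = `|r| * vnorm v.
Proof.
rewrite /vnorm -sqrtr_sqr -sqrtrM ?sqr_ge0 //; congr Num.sqrt.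
by rewrite /vdot mulr_sumr; apply: eq_bigr => i _; rewrite !tnth_vE; ring.
Qed.

Lemma vnorm0 : vnorm (vzero R d) = 0.
Proof. by rewrite /vnorm /vdot big1 ?sqrtr0 // => i _; rewrite tnth_vzero mul0r. Qed.

Lemma vdistxx x : vdist x x = 0.
Proof.
rewrite /vdist (_ : vsub x x = vzero R d) ?vnorm0 //.
by apply: eq_from_tnth => i; rewrite !tnth_vE subrr.
Qed.

Lemma vdistC x y : vdist x y = vdist y x.
Proof.
rewrite /vdist (_ : vsub x y = vscale (-1) (vsub y x)) ?vnormZ ?normrN ?normr1 ?mul1r //.
by apply: eq_from_tnth => i; rewrite !tnth_vE; ring.
Qed.

Lemma vdist_triangle x y z : vdist x z <= vdist x y + vdist y z.
Proof.
rewrite /vdist (_ : vsub x z = vadd (vsub x y) (vsub y z)) ?vnormD //.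
by apply: eq_from_tnth => i; rewrite !tnth_vE; ring.
Qed.

Lemma vdist_le_vnormD x y : vdist x y <= vnorm x + vnorm y.
Proof.
rewrite /vdist (_ : vsub x y = vadd x (vscale (-1) y)); last first.
  by apply: eq_from_tnth => i; rewrite !tnth_vE; ring.
by apply: le_trans (vnormD _ _) _; rewrite vnormZ normrN normr1 mul1r.
Qed.

Lemma vdist_eq0 x y : vdist x y = 0 -> x = y.
Proof.
move=> xy0; have /vdot_eq0 xy_zero : vdot (vsub x y) (vsub x y) = 0.
  by rewrite -sqr_vnorm -/(vdist x y) xy0 expr0n.
apply: eq_from_tnth => i; apply/eqP; rewrite -subr_eq0.
by rewrite -tnth_vsub xy_zero tnth_vzero.
Qed.

Lemma tnth_dist_le_vdist x y i : `|tnth x i - tnth y i| <= vdist x y.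
Proof.
rewrite /vdist /vnorm -sqrtr_sqr ler_sqrt ?vdot_ge0 // /vdot (bigD1 i) //=.
by rewrite tnth_vsub -expr2 lerDl; apply: sumr_ge0 => j _; rewrite -expr2 sqr_ge0.
Qed.

End Euclid.

(** * Nonexpansive projections *)

Section Nonexpansive.
Variables (R : realType) (d : nat).
Implicit Types (u v w x y p q : Vec R d) (K : set (Vec R d)).

(* Adding the two conditions gives [|p - q|^2 <= <x - y, p - q> <= |x - y| |p - q|]. *)
Lemma vdist_le_of_obtuse x y p q :
  vdot (vsub x p) (vsub q p) <= 0 -> vdot (vsub y q) (vsub p q) <= 0 ->
  vdist p q <= vdist x y.
Proof.
move=> xp_obtuse yq_obtuse.
have E : vdot (vsub x p) (vsub q p) + vdot (vsub y q) (vsub p q) =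
         vdist p q ^+ 2 - vdot (vsub x y) (vsub p q).
  rewrite /vdist sqr_vnorm /vdot -sumrB -big_split.
  by apply: eq_bigr => i _ /=; rewrite !tnth_vE; ring.
have := vdot_cauchy_schwarz (vsub x y) (vsub p q).
have := vdist_ge0 p q; have := vdist_ge0 x y.
rewrite -/(vdist x y) -/(vdist p q); nra.
Qed.

Lemma le0_of_forall_le_scale (b c : R) :
  0 <= c -> (forall a, 0 < a <= 1 -> 2 * b <= a * c) -> b <= 0.
Proof.
move=> c0 small_a; rewrite leNgt; apply/negP => b_gt0.
pose a := Num.min 1 (b / (c + 1)).
have a_gt0 : 0 < a by rewrite lt_min ltr01 divr_gt0 // ltr_pwDr.
have a_le1 : a <= 1 by rewrite ge_min lexx.
have : a * (c + 1) <= b by rewrite -ler_pdivlMr ?ltr_pwDr // ge_min lexx orbT.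
have := small_a a; rewrite a_gt0 a_le1 => /(_ isT); nra.
Qed.

Lemma is_proj_obtuse K x p y :
  convex_vset K -> is_proj K x p -> K y -> vdot (vsub x p) (vsub y p) <= 0.
Proof.
move=> cK [Kp p_min] Ky; apply: (le0_of_forall_le_scale (vdot_ge0 (vsub y p))).
move=> a /andP[a_gt0 a_le1].
have a01 : 0 <= a <= 1 by rewrite ltW.
have := p_min _ (cK y p a Ky Kp a01).
rewrite -ler_sqr ?nnegrE ?vdist_ge0 // /vdist !sqr_vnorm.
have -> : vsub x (vadd (vscale a y) (vscale (1 - a) p)) =
          vadd (vscale 1 (vsub x p)) (vscale (- a) (vsub y p)).
  by apply: eq_from_tnth => i; rewrite !tnth_vE; ring.
rewrite vdot_lincomb; nra.
Qed.

Lemma proj_nonexpansive K (proj : Vec R d -> Vec R d) x y :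
  convex_vset K -> (forall x, is_proj K x (proj x)) ->
  vdist (proj x) (proj y) <= vdist x y.
Proof.
move=> cK hp; apply: vdist_le_of_obtuse; apply: (is_proj_obtuse cK) => //.
- exact: (hp y).1.
- exact: (hp x).1.
Qed.

Lemma is_proj_id K x p : is_proj K x p -> K x -> p = x.
Proof.
move=> [_ p_min] Kx; apply/esym/vdist_eq0/le_anti.
by rewrite vdist_ge0 -(vdistxx x) p_min.
Qed.

Section Clip.
Variable C : R.
Hypothesis C_ge0 : 0 <= C.

Lemma clipB_small u : vnorm u <= C -> clipB C u = u.
Proof.
move=> uC; have [u0|u_neq0] := eqVneq (vnorm u) 0.
  have -> : u = vzero R d by apply: vdot_eq0; rewrite -sqr_vnorm u0 expr0n.
  by apply: eq_from_tnth => i; rewrite !tnth_vE mulr0.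
rewrite /clipB (_ : Num.min _ _ = 1).
  by apply: eq_from_tnth => i; rewrite tnth_vE mul1r.
by apply/min_idPl; rewrite ler_pdivlMr ?mul1r // lt_def u_neq0 vnorm_ge0.
Qed.

Lemma clipB_large u : C < vnorm u -> clipB C u = vscale (C / vnorm u) u.
Proof.
move=> Cu; have u_gt0 : 0 < vnorm u by apply: le_lt_trans Cu.
rewrite /clipB (_ : Num.min _ _ = C / vnorm u) //.
by apply/min_idPr; rewrite ler_pdivrMr ?mul1r // ltW.
Qed.

Lemma vnorm_clipB_le u : vnorm (clipB C u) <= C.
Proof.
have [uC|Cu] := leP (vnorm u) C; first by rewrite clipB_small.
have u_gt0 : 0 < vnorm u by apply: le_lt_trans Cu.
by rewrite clipB_large // vnormZ ger0_norm ?divr_ge0 ?vnorm_ge0 // divfK ?gt_eqF.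
Qed.

Lemma clipB_obtuse u w : vnorm w <= C ->
  vdot (vsub u (clipB C u)) (vsub w (clipB C u)) <= 0.
Proof.
move=> wC; have [uC|Cu] := leP (vnorm u) C.
  rewrite clipB_small // /vdot big1 // => i _.
  by rewrite tnth_vsub subrr mul0r.
have u_gt0 : 0 < vnorm u by apply: le_lt_trans Cu.
rewrite clipB_large //; set m := C / vnorm u.
have -> : vdot (vsub u (vscale m u)) (vsub w (vscale m u)) =
          (1 - m) * (vdot u w - m * vnorm u ^+ 2).
  rewrite sqr_vnorm /vdot mulr_sumr -sumrB mulr_sumr.
  by apply: eq_bigr => i _ /=; rewrite !tnth_vE; ring.
have -> : m * vnorm u ^+ 2 = C * vnorm u by rewrite /m expr2 mulrA divfK ?gt_eqF.
apply: mulr_ge0_le0; first by rewrite subr_ge0 ler_pdivrMr ?mul1r // ltW.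
rewrite subr_le0 mulrC; apply: le_trans (vdot_cauchy_schwarz u w) _.
by rewrite ler_wpM2l ?vnorm_ge0.
Qed.

Lemma clipB_nonexpansive u v : vdist (clipB C u) (clipB C v) <= vdist u v.
Proof. by apply: vdist_le_of_obtuse; apply: clipB_obtuse; apply: vnorm_clipB_le. Qed.

Lemma vdist_clipB_le u v : vdist (clipB C u) (clipB C v) <= 2 * C.
Proof.
apply: le_trans (vdist_le_vnormD _ _) _.
by rewrite mulr2n mulrDl mul1r lerD ?vnorm_clipB_le.
Qed.

End Clip.

Section BigVadd.
Variable n : nat.
Local Notation vsum F := (\big[@vadd R d/vzero R d]_(i < n) F i).

Lemma tnth_vsum (F : 'I_n -> Vec R d) k :
  tnth (vsum F) k = \sum_(i < n) tnth (F i) k.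
Proof.
exact: (big_morph (fun v => tnth v k) (fun a b => tnth_vadd a b k) (tnth_vzero R k)).
Qed.

Lemma vnorm_vsum_le (F : 'I_n -> Vec R d) :
  vnorm (vsum F) <= \sum_(i < n) vnorm (F i).
Proof.
apply: (big_ind2 (fun v r => vnorm v <= r)); first by rewrite vnorm0.
  by move=> ? ? ? ? h1 h2; apply: le_trans (vnormD _ _) (lerD h1 h2).
by [].
Qed.

Lemma vsub_vsum (F F' : 'I_n -> Vec R d) :
  vsub (vsum F) (vsum F') = vsum (fun i => vsub (F i) (F' i)).
Proof.
apply: eq_from_tnth => k; rewrite tnth_vsub !tnth_vsum -sumrB.
by apply: eq_bigr => i _; rewrite tnth_vsub.
Qed.

End BigVadd.
End Nonexpansive.

(** * Synchronous coupling *)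

Definition sgd_step (R : realType) (d n : nat) (proj : Vec R d -> Vec R d)
    (grads : 'I_n -> Vec R d -> Vec R d) (eta C : R) (w g : Vec R d) : Vec R d :=
  proj (vadd (vsub w (vscale (eta / n%:R)
               (\big[@vadd R d/vzero R d]_(i < n) clipB C (grads i w)))) g).

Lemma noisy_sgdS (R : realType) (d n : nat) (T : Type) (proj : Vec R d -> Vec R d)
    (grads : 'I_n -> Vec R d -> Vec R d) (eta C : R) (G : nat -> T -> Vec R d) w0 t om :
  noisy_sgd proj grads eta C G w0 t.+1 om =
  sgd_step proj grads eta C (noisy_sgd proj grads eta C G w0 t om) (G t om).
Proof. by []. Qed.

Section SgdStep.
Variables (R : realType) (d n : nat) (K : set (Vec R d)) (proj : Vec R d -> Vec R d).
Variables (eta C : R).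
Hypothesis cK : convex_vset K.
Hypothesis proj_K : forall x, is_proj K x (proj x).
Hypothesis eta_ge0 : 0 <= eta.

Lemma vdist_sgd_step (gi gi' : 'I_n -> Vec R d -> Vec R d) (w w' g g' : Vec R d) :
  vdist (sgd_step proj gi eta C w g) (sgd_step proj gi' eta C w' g') <=
  vdist w w' + eta / n%:R * \sum_(i < n) vdist (clipB C (gi i w)) (clipB C (gi' i w'))
  + vdist g g'.
Proof.
apply: le_trans (proj_nonexpansive _ _ cK proj_K) _.
set S := \big[_/_]_(i < n) _; set S' := \big[_/_]_(i < n) _.
rewrite /vdist (_ : vsub _ _ = vadd (vadd (vsub w w') (vscale (- (eta / n%:R)) (vsub S S')))
                                    (vsub g g')); last first.
  by apply: eq_from_tnth => i; rewrite !tnth_vE; ring.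
apply: le_trans (vnormD _ _) _; rewrite lerD2r.
apply: le_trans (vnormD _ _) _; rewrite lerD2l vnormZ normrN ger0_norm ?divr_ge0 //.
by rewrite ler_wpM2l ?divr_ge0 // /S /S' vsub_vsum vnorm_vsum_le.
Qed.

Lemma sgd_step_in (gi : 'I_n -> Vec R d -> Vec R d) (w g : Vec R d) :
  K (sgd_step proj gi eta C w g).
Proof. exact: (proj_K _).1. Qed.

End SgdStep.

Section SyncCoupling.
Variables (R : realType) (d n : nat) (K : set (Vec R d)) (proj : Vec R d -> Vec R d).
Variables (gi gi' : 'I_n -> Vec R d -> Vec R d) (j : 'I_n) (L lam eta C : R).
Hypothesis cK : convex_vset K.
Hypothesis proj_K : forall x, is_proj K x (proj x).
Hypothesis gi_gi' : forall i, i != j -> gi i = gi' i.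
Hypothesis gi_holder : forall i, holder_on K L lam (gi i).
Hypotheses (L_ge0 : 0 <= L) (lam_gt0 : 0 < lam) (eta_ge0 : 0 <= eta) (C_ge0 : 0 <= C).

(* Only the j-th clipped gradient may differ by [2 C]; the others are Hoelder in [w]. *)
Lemma vdist_sgd_step_sync w w' g (D : R) : vdist w w' <= D ->
  (forall i, vdist (gi i w) (gi i w') <= L * D `^ lam) ->
  vdist (sgd_step proj gi eta C w g) (sgd_step proj gi' eta C w' g) <=
  Num.min (gfun lam (eta * L) D + 2 * eta * C / n%:R) (D + 2 * eta * C).
Proof.
move=> wD gi_close.
have n_gt0 : 0 < n%:R :> R by rewrite ltr0n; case: n j => // -[].
have := vdist_sgd_step C cK proj_K eta_ge0 gi gi' w w' g g.
rewrite vdistxx addr0; set S := \sum_(i < n) _ => step_le.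
have S_le_clip : S <= n%:R * (2 * C).
  apply: (le_trans (y := \sum_(i < n) 2 * C)).
    by apply: ler_sum => i _; exact: vdist_clipB_le.
  by rewrite sumr_const card_ord [leRHS]mulr_natl.
have S_le_holder : S <= 2 * C + n%:R * (L * D `^ lam).
  rewrite /S (bigD1 j) //= lerD ?vdist_clipB_le //.
  apply: (le_trans (y := \sum_(i < n | i != j) L * D `^ lam)).
    apply: ler_sum => i ij; rewrite -(gi_gi' ij).
    exact: le_trans (clipB_nonexpansive C_ge0 _ _) (gi_close i).
  apply: (le_trans (y := \sum_(i < n) L * D `^ lam)).
    by rewrite [leRHS](bigD1 j) //= lerDr mulr_ge0 ?powR_ge0.
  by rewrite sumr_const card_ord [leRHS]mulr_natl.
have en_ge0 : 0 <= eta / n%:R by rewrite divr_ge0 // ltW.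
rewrite /gfun le_min; apply/andP; split; apply: le_trans step_le _.
- have := ler_wpM2l en_ge0 S_le_holder.
  rewrite (_ : eta / n%:R * (_ + _) = eta * L * D `^ lam + 2 * eta * C / n%:R); last first.
    by field; rewrite gt_eqF.
  lra.
- have := ler_wpM2l en_ge0 S_le_clip.
  rewrite (_ : eta / n%:R * (n%:R * (2 * C)) = 2 * eta * C); last by field; rewrite gt_eqF.
  lra.
Qed.

Lemma vdist_noisy_sgd_le_Dseq (T : Type) (G : nat -> T -> Vec R d) w0 t om :
  vdist (noisy_sgd proj gi eta C G w0 t om) (noisy_sgd proj gi' eta C G w0 t om)
  <= Dseq lam eta L C n t.
Proof.
elim: t => [|t IH]; first by rewrite /= vdistxx.
rewrite !noisy_sgdS; apply: vdist_sgd_step_sync => // i.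
case: t IH => [|t] IH; first by rewrite vdistxx mulr_ge0 ?powR_ge0.
rewrite !noisy_sgdS in IH *.
apply: le_trans (gi_holder _ (sgd_step_in _ _ proj_K _ _ _) (sgd_step_in _ _ proj_K _ _ _)) _.
rewrite ler_wpM2l // ge0_ler_powR ?nnegrE ?vdist_ge0 ?(ltW lam_gt0) //.
exact: le_trans (vdist_ge0 _ _) IH.
Qed.

End SyncCoupling.

(** * Measurability of the iterates *)

Section Rounding.
Variables (R : realType) (d : nat).
Local Notation V := (Vec R d).

Definition grid_index (c : R) (v : V) : d.-tuple int :=
  [tuple Num.floor (c * tnth v i) | i < d].
Definition grid_point (c : R) (z : d.-tuple int) : V :=
  [tuple (tnth z i)%:~R / c | i < d].
Definition round_grid (k : nat) (v : V) : V := grid_point k.+1%:R (grid_index k.+1%:R v).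

(* Each coordinate moves by less than [1 / (k + 1)]. *)
Lemma round_grid_near (v : V) e :
  0 < e -> \forall k \near \oo, vdist v (round_grid k v) < e.
Proof.
move=> e_gt0; near=> k.
have k_large : d%:R / e ^+ 2 < k%:R by near: k; exact: nbhs_infty_gtr.
pose c : R := k.+1%:R.
have c_ge1 : 1 <= c by rewrite ler1n.
have c_gt0 : 0 < c by apply: lt_le_trans c_ge1.
have dc_lt : d%:R / e ^+ 2 < c by apply: lt_le_trans k_large _; rewrite ler_nat.
apply: vnorm_lt => //; apply: (le_lt_trans (y := \sum_(i < d) c^-1)).
  apply: ler_sum => i _.
  rewrite -expr2 !tnth_vE /round_grid /grid_point /grid_index !tnth_mktuple.
  set x := tnth v i; set fl := (Num.floor (c * x))%:~R.
  have fl_le : fl <= c * x by exact: floor_le.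
  have fl_gt : c * x < fl + 1 by rewrite /fl -[1]/(1%:~R) -intrD floorD1_gt.
  rewrite (_ : x - fl / c = (c * x - fl) / c); last by field; rewrite gt_eqF.
  rewrite expr_div_n ler_pdivrMr ?exprn_gt0 // (_ : c^-1 * c ^+ 2 = c); last first.
    by field; rewrite gt_eqF.
  nra.
rewrite sumr_const card_ord -mulr_natr mulrC ltr_pdivrMr //.
by rewrite ltr_pdivrMr ?exprn_gt0 // mulrC in dc_lt.
Unshelve. all: end_near. Qed.

Definition continuous2 (f : V -> V -> R) : Prop :=
  forall a b e, 0 < e -> exists2 del, 0 < del & forall a' b',
    vdist a a' < del -> vdist b b' < del -> `|f a b - f a' b'| < e.

Lemma continuous2_vdist : continuous2 (@vdist R d).
Proof.
move=> a b e e_gt0; exists (e / 2); first by rewrite divr_gt0.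
move=> a' b' aa' bb'; rewrite ltr_norml.
have := vdist_triangle a a' b; have := vdist_triangle a' b' b.
have := vdist_triangle a' a b'; have := vdist_triangle a b b'.
rewrite (vdistC b' b) (vdistC a' a); lra.
Qed.

Lemma continuous2_tnth_of_bound (Phi : V -> V -> V) (M lam : R) :
  0 <= M -> 0 < lam ->
  (forall a b a' b', vdist (Phi a b) (Phi a' b') <=
     vdist a a' + M * vdist a a' `^ lam + vdist b b') ->
  forall i, continuous2 (fun a b => tnth (Phi a b) i).
Proof.
move=> M_ge0 lam_gt0 Phi_bound i a b e e_gt0.
pose q := e / 3; pose r := q / (M + 1).
have q_gt0 : 0 < q by rewrite divr_gt0.
have r_gt0 : 0 < r by rewrite divr_gt0 // ltr_wpDl.
exists (Num.min q (r `^ lam^-1)); first by rewrite lt_min q_gt0 powR_gt0.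
move=> a' b'; rewrite !lt_min => /andP[aa'_q aa'_r] /andP[bb'_q _].
apply: le_lt_trans (tnth_dist_le_vdist _ _ _) _; apply: le_lt_trans (Phi_bound _ _ _ _) _.
have pow_le : vdist a a' `^ lam <= r.
  have : vdist a a' `^ lam <= (r `^ lam^-1) `^ lam.
    by rewrite ge0_ler_powR ?nnegrE ?vdist_ge0 ?powR_ge0 ?(ltW lam_gt0) ?ltW.
  by rewrite -powRrM mulVf ?gt_eqF // powRr1 // ltW.
have M_le : M * vdist a a' `^ lam <= q.
  apply: le_trans (ler_wpM2l M_ge0 pow_le) _.
  by rewrite /r mulrA ler_pdivrMr ?ltr_wpDl // mulrC ler_pM2l // lerDl.
rewrite /q in aa'_q bb'_q M_le *; lra.
Qed.

Context {dT : measure_display} {T : measurableType dT}.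

Lemma measurable_floor_eq (g : T -> R) (c : R) (z : int) :
  measurable_fun setT g -> measurable [set x | Num.floor (c * g x) = z].
Proof.
move=> mg; have -> : [set x | Num.floor (c * g x) = z] =
    setT `&` (fun x => c * g x) @^-1` `[z%:~R, (z + 1)%:~R[%classic.
  apply/seteqP; split => x /=; rewrite in_itv /=.
    by move=> <-; rewrite floor_le floorD1_gt.
  move=> [_ /andP[zx xz1]]; apply/eqP; rewrite eq_le.
  by rewrite floor_ge_int zx andbT -ltzD1 floor_lt_int.
by apply: (measurable_funM (measurable_cst c) mg) => //; exact: measurable_itv.
Qed.

Lemma measurable_grid_index_eq (u : T -> V) (c : R) (z : d.-tuple int) :
  measurable_fun setT u -> measurable [set x | grid_index c (u x) = z].
Proof.
move=> mu; have -> : [set x | grid_index c (u x) = z] =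
    \bigcap_(i in [set: 'I_d]) [set x | Num.floor (c * tnth (u x) i) = tnth z i].
  apply/seteqP; split => x /=; first by move=> <- i _; rewrite tnth_mktuple.
  by move=> h; apply: eq_from_tnth => i; rewrite tnth_mktuple; exact: h.
apply: fin_bigcap_measurable; first exact: finite_finset.
move=> i _; apply: measurable_floor_eq.
exact: measurableT_comp (measurable_tnth i) mu.
Qed.

Lemma measurable_fun_countable_factor (U : countType) (phi : T -> U) (F : U -> R) :
  (forall a, measurable (phi @^-1` [set a])) -> measurable_fun setT (F \o phi).
Proof.
move=> mphi _ B _; rewrite setTI.
have -> : (F \o phi) @^-1` B =
    \bigcup_(a : U) (if pselect (B (F a)) then phi @^-1` [set a] else set0).
  apply/seteqP; split => x /=.
    by move=> h; exists (phi x) => //; case: pselect.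
  by move=> [a _]; case: pselect => //= Ba ->.
apply: countable_bigcupT_measurable; first exact: countableP.
by move=> a; case: pselect => Ba; [exact: mphi | exact: measurable0].
Qed.

Lemma measurable_fun_round_grid (f : V -> V -> R) (u1 u2 : T -> V) k :
  measurable_fun setT u1 -> measurable_fun setT u2 ->
  measurable_fun setT (fun x => f (round_grid k (u1 x)) (round_grid k (u2 x))).
Proof.
move=> mu1 mu2; pose c : R := k.+1%:R.
pose F := fun z : d.-tuple int * d.-tuple int => f (grid_point c z.1) (grid_point c z.2).
apply: (@measurable_fun_countable_factor _
  (fun x => (grid_index c (u1 x), grid_index c (u2 x))) F).
move=> [z1 z2]; rewrite (_ : _ @^-1` _ =
  [set x | grid_index c (u1 x) = z1] `&` [set x | grid_index c (u2 x) = z2]).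
  by apply: measurableI; exact: measurable_grid_index_eq.
by apply/seteqP; split => x /=; [case=> <- <- | case=> <- <-].
Qed.

Lemma measurable_fun_continuous2 (f : V -> V -> R) (u1 u2 : T -> V) :
  continuous2 f -> measurable_fun setT u1 -> measurable_fun setT u2 ->
  measurable_fun setT (fun x => f (u1 x) (u2 x)).
Proof.
move=> cf mu1 mu2.
apply: (measurable_fun_cvg
  (h := fun k x => f (round_grid k (u1 x)) (round_grid k (u2 x)))).
  by move=> k; exact: measurable_fun_round_grid.
move=> x _; apply/cvgrPdist_lt => e e_gt0.
have [del del_gt0 close] := cf (u1 x) (u2 x) e e_gt0.
by near=> k; apply: close; near: k; exact: round_grid_near.
Unshelve. all: end_near. Qed.

Lemma measurable_fun_of_bound (Phi : V -> V -> V) (M lam : R) (u1 u2 : T -> V) :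
  0 <= M -> 0 < lam ->
  (forall a b a' b', vdist (Phi a b) (Phi a' b') <=
     vdist a a' + M * vdist a a' `^ lam + vdist b b') ->
  measurable_fun setT u1 -> measurable_fun setT u2 ->
  measurable_fun setT (fun x => Phi (u1 x) (u2 x)).
Proof.
move=> M_ge0 lam_gt0 Phi_bound mu1 mu2; apply/measurable_fun_tnthP => i.
apply: (measurable_fun_continuous2 (f := fun a b => tnth (Phi a b) i)) => //.
exact: continuous2_tnth_of_bound Phi_bound i.
Qed.

End Rounding.

Section MeasurableSgd.
Variables (R : realType) (d n : nat) (K : set (Vec R d)) (proj : Vec R d -> Vec R d).
Variables (gi : 'I_n -> Vec R d -> Vec R d) (L lam eta C : R).
Hypothesis cK : convex_vset K.
Hypothesis proj_K : forall x, is_proj K x (proj x).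
Hypothesis gi_holder : forall i, holder_on K L lam (gi i).
Hypotheses (L_ge0 : 0 <= L) (lam_gt0 : 0 < lam) (eta_ge0 : 0 <= eta) (C_ge0 : 0 <= C).

Lemma vdist_sgd_step_proj a b a' b' :
  vdist (sgd_step proj gi eta C (proj a) b) (sgd_step proj gi eta C (proj a') b') <=
  vdist a a' + eta / n%:R * (n%:R * L) * vdist a a' `^ lam + vdist b b'.
Proof.
have proj_le := proj_nonexpansive a a' cK proj_K.
apply: le_trans (vdist_sgd_step C cK proj_K eta_ge0 _ _ _ _ _ _) _.
rewrite lerD2r lerD // -[leRHS]mulrA ler_wpM2l ?divr_ge0 //.
apply: (le_trans (y := \sum_(i < n) L * vdist a a' `^ lam)).
  apply: ler_sum => i _; apply: le_trans (clipB_nonexpansive C_ge0 _ _) _.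
  apply: le_trans (gi_holder _ (proj_K a).1 (proj_K a').1) _.
  by rewrite ler_wpM2l // ge0_ler_powR ?nnegrE ?vdist_ge0 ?(ltW lam_gt0).
by rewrite sumr_const card_ord -mulrA [leRHS]mulr_natl.
Qed.

Lemma measurable_noisy_sgd {dT : measure_display} {T : measurableType dT}
    (G : nat -> T -> Vec R d) w0 t :
  (forall s, measurable_fun setT (G s)) ->
  measurable_fun setT (noisy_sgd proj gi eta C G w0 t).
Proof.
move=> mG; case: t => [|t]; first exact: measurable_cst.
elim: t => [|t IH].
  apply: (measurable_fun_of_bound (Phi := fun _ b => sgd_step proj gi eta C w0 b)
            (M := 0) (lam := lam) _ _ _ (mG 0%N) (mG 0%N)) => // a b a' b'.
  apply: le_trans (vdist_sgd_step C cK proj_K eta_ge0 _ _ _ _ _ _) _.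
  rewrite big1 => [|i _]; last exact: vdistxx.
  by rewrite vdistxx mulr0 mul0r !addr0 add0r lerDr vdist_ge0.
have -> : noisy_sgd proj gi eta C G w0 t.+2 =
    fun om => sgd_step proj gi eta C (proj (noisy_sgd proj gi eta C G w0 t.+1 om))
                       (G t.+1 om).
  apply: funext => om; rewrite [LHS]noisy_sgdS (is_proj_id (proj_K _)) //.
  exact: (sgd_step_in eta C proj_K).
have M_ge0 : 0 <= eta / n%:R * (n%:R * L) by rewrite !mulr_ge0 ?invr_ge0.
exact: (measurable_fun_of_bound M_ge0 lam_gt0 vdist_sgd_step_proj IH (mG _)).
Qed.

End MeasurableSgd.

(** * Law of the iterates *)

Definition mfun_of d1 d2 (T1 : measurableType d1) (T2 : measurableType d2)
    (f : T1 -> T2) (mf : measurable_fun setT f) : {mfun T1 >-> T2} :=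
  mfun_Sub (mem_set mf : f \in mfun).

Section Boxes.
Variables (R : realType) (m : nat).

Definition box (B : 'I_m -> set R) : set (m.-tuple R) :=
  \bigcap_(k in [set: 'I_m]) ((fun x => tnth x k) @^-1` B k).

Definition boxes : set (set (m.-tuple R)) :=
  [set box B | B in [set B | forall k, measurable (B k)]].

Lemma measurable_box B : (forall k, measurable (B k)) -> measurable (box B).
Proof.
move=> mB; apply: fin_bigcap_measurable; first exact: finite_finset.
by move=> k _; rewrite -[X in measurable X]setTI; exact: measurable_tnth.
Qed.

Lemma boxes_generate : measurable = <<s boxes >>.
Proof.
apply/seteqP; split; last first.
  apply: smallest_sub; first exact: sigma_algebra_measurable.
  by move=> _ [B mB <-]; exact: measurable_box.
apply: smallest_sub; first exact: smallest_sigma_algebra.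
apply: (big_ind (fun S => S `<=` <<s boxes >>)) => //.
  by move=> S1 S2 S1_sub S2_sub X [/S1_sub|/S2_sub].
move=> i _ _ [Y mY <-]; apply: sub_sigma_algebra.
exists (fun k => if k == i then Y else setT); first by move=> k /=; case: ifP.
apply/seteqP; split => x /=; last by move=> [_ Yx] k _; case: ifP => // /eqP ->.
by move=> box_x; split => //; have := box_x i I; rewrite eqxx.
Qed.

Lemma boxes_setI_closed : setI_closed boxes.
Proof.
move=> _ _ [B mB <-] [B' mB' <-]; exists (fun k => B k `&` B' k).
  by move=> k; apply: measurableI.
apply/seteqP; split => x /=; first by move=> box_x; split => k _; have [] := box_x k I.
by move=> [Bx B'x] k _; split; [exact: Bx | exact: B'x].
Qed.

Lemma boxesT : boxes setT.
Proof. by exists (fun _ => setT) => //; apply/seteqP; split => x //= _ k _. Qed.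

End Boxes.

Lemma noisy_sgd_ext (R : realType) (d n : nat) (T1 T2 : Type) (proj : Vec R d -> Vec R d)
    (grads : 'I_n -> Vec R d -> Vec R d) (eta C : R)
    (G1 : nat -> T1 -> Vec R d) (G2 : nat -> T2 -> Vec R d) w0 t om1 om2 :
  (forall s, (s < t)%N -> G1 s om1 = G2 s om2) ->
  noisy_sgd proj grads eta C G1 w0 t om1 = noisy_sgd proj grads eta C G2 w0 t om2.
Proof.
elim: t => [//|t IH] G12 /=.
by rewrite IH ?G12 // => s st; apply: G12; exact: ltnW.
Qed.

Section NoiseVector.
Variables (R : realType) (d t : nat).
Local Notation m := #|{: 'I_t * 'I_d}|.

(* The first [t] noise vectors, flattened into one [m]-tuple through [enum_val]. *)
Definition noise_index (k : 'I_m) : nat * 'I_d :=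
  let: (s, i) := enum_val k in (val s, i).

Definition noise_vector (T : Type) (G : nat -> T -> Vec R d) (om : T) : m.-tuple R :=
  [tuple tnth (G (noise_index k).1 om) (noise_index k).2 | k < m].

Definition noise_of_vector (s : nat) (x : m.-tuple R) : Vec R d :=
  if insub s is Some s' then [tuple tnth x (enum_rank (s', i)) | i < d] else vzero R d.

Lemma noise_index_inj : injective noise_index.
Proof.
move=> k1 k2 eq_index; apply: enum_val_inj; move: eq_index; rewrite /noise_index.
by case: (enum_val k1) (enum_val k2) => [s1 i1] [s2 i2] [/val_inj -> ->].
Qed.

Lemma noise_index_rank (s : 'I_t) (i : 'I_d) :
  noise_index (enum_rank (s, i)) = (val s, i).
Proof. by rewrite /noise_index enum_rankK. Qed.

Lemma noise_of_noise_vector (T : Type) (G : nat -> T -> Vec R d) s om :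
  (s < t)%N -> noise_of_vector s (noise_vector G om) = G s om.
Proof.
move=> st; rewrite /noise_of_vector insubT; apply: eq_from_tnth => i.
by rewrite !tnth_mktuple noise_index_rank.
Qed.

Lemma measurable_noise_of_vector s : measurable_fun setT (noise_of_vector s).
Proof.
rewrite /noise_of_vector; case: insub => [s'|]; last exact: measurable_cst.
apply/measurable_fun_tnthP => i.
rewrite (_ : _ \o _ = fun x : m.-tuple R => tnth x (enum_rank (s', i))).
  exact: measurable_tnth.
by apply: funext => x /=; rewrite tnth_mktuple.
Qed.

Variables (dO : measure_display) (Omega : measurableType dO).
Variables (P : probability Omega R) (sigma : R).

Lemma iid_gaussian_noise_measurable (G : nat -> Omega -> Vec R d) :
  iid_gaussian_noise P sigma G -> forall s, measurable_fun setT (G s).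
Proof. by move=> [mG _ _] s; apply/measurable_fun_tnthP => i; exact: (mG (s, i)). Qed.

Lemma measurable_noise_vector (G : nat -> Omega -> Vec R d) :
  iid_gaussian_noise P sigma G -> measurable_fun setT (noise_vector G).
Proof.
move=> [mG _ _]; apply/measurable_fun_tnthP => k.
rewrite (_ : _ \o _ = fun om => tnth (G (noise_index k).1 om) (noise_index k).2).
  exact: mG.
by apply: funext => om /=; rewrite tnth_mktuple.
Qed.

(* On a box the probability factorizes over the coordinates, each of law N(0, sigma^2). *)
Lemma noise_vector_box (G G' : nat -> Omega -> Vec R d) (B : 'I_m -> set R) :
  iid_gaussian_noise P sigma G -> iid_gaussian_noise P sigma G' ->
  (forall k, measurable (B k)) ->
  P (noise_vector G @^-1` box B) = P (noise_vector G' @^-1` box B).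
Proof.
move=> [_ lawG indepG] [_ lawG' indepG'] mB.
pose S := map noise_index (enum 'I_m).
pose B' ti := if [pick k | noise_index k == ti] is Some k then B k else setT.
have B'_index k : B' (noise_index k) = B k.
  rewrite /B'; case: pickP => [k' /eqP /noise_index_inj -> //|/(_ k)].
  by rewrite eqxx.
have mB' ti : measurable (B' ti) by rewrite /B'; case: pickP.
have uniqS : uniq S by rewrite map_inj_uniq ?enum_uniq //; exact: noise_index_inj.
have preimE (H : nat -> Omega -> Vec R d) : noise_vector H @^-1` box B =
    \bigcap_(ti in [set` S]) ((fun om => tnth (H ti.1 om) ti.2) @^-1` B' ti).
  apply/seteqP; split => om /=.
    move=> Hom _ /mapP[k _ ->]; rewrite B'_index.
    by have := Hom k I; rewrite /preimage /= tnth_mktuple.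
  move=> Hom k _; rewrite /preimage /= tnth_mktuple -B'_index.
  by apply: Hom; apply/mapP; exists k; rewrite ?mem_enum.
rewrite !preimE indepG // indepG' //; apply: eq_bigr => ti _.
by rewrite lawG // lawG'.
Qed.

Lemma noise_vector_law_eq (G G' : nat -> Omega -> Vec R d) (A : set (m.-tuple R)) :
  iid_gaussian_noise P sigma G -> iid_gaussian_noise P sigma G' -> measurable A ->
  P (noise_vector G @^-1` A) = P (noise_vector G' @^-1` A).
Proof.
move=> iidG iidG' mA.
apply: (@measure_unique _ R _ (@boxes R m) (fun=> setT) (@boxes_generate R m)
  (@boxes_setI_closed R m) (fun=> @boxesT R m) _
  (distribution P (mfun_of (measurable_noise_vector iidG)))
  (distribution P (mfun_of (measurable_noise_vector iidG')))) => //.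
- by apply/seteqP; split => x // _; exists 0%N.
- by move=> _ [B mB <-]; exact: noise_vector_box.
- by move=> _ /=; rewrite probability_setT ltry.
Qed.

End NoiseVector.
Arguments noise_of_vector {R d} t s x.

Section SgdLaw.
Variables (R : realType) (d n : nat) (K : set (Vec R d)) (proj : Vec R d -> Vec R d).
Variables (gi : 'I_n -> Vec R d -> Vec R d) (L lam eta C sigma : R).
Variables (dO : measure_display) (Omega : measurableType dO) (P : probability Omega R).
Hypothesis cK : convex_vset K.
Hypothesis proj_K : forall x, is_proj K x (proj x).
Hypothesis gi_holder : forall i, holder_on K L lam (gi i).
Hypotheses (L_ge0 : 0 <= L) (lam_gt0 : 0 < lam) (eta_ge0 : 0 <= eta) (C_ge0 : 0 <= C).

Lemma noisy_sgd_law_eq (G G' : nat -> Omega -> Vec R d) w0 t (A : set (Vec R d)) :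
  iid_gaussian_noise P sigma G -> iid_gaussian_noise P sigma G' -> measurable A ->
  P (noisy_sgd proj gi eta C G w0 t @^-1` A) =
  P (noisy_sgd proj gi eta C G' w0 t @^-1` A).
Proof.
move=> iidG iidG' mA; pose F := noisy_sgd proj gi eta C (noise_of_vector t) w0 t.
have factor H : noisy_sgd proj gi eta C H w0 t = F \o noise_vector t H.
  by apply: funext => om; apply: noisy_sgd_ext => s st; rewrite noise_of_noise_vector.
have mF : measurable_fun setT F.
  by apply: (measurable_noisy_sgd cK) => // s; exact: measurable_noise_of_vector.
have mFA : measurable (F @^-1` A) by rewrite -[X in measurable X]setTI; exact: mF.
by rewrite !factor; exact: noise_vector_law_eq iidG iidG' mFA.
Qed.

End SgdLaw.

Lemma W_infty_le_pointwise (R : realType) (d : nat) (dO : measure_display)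
    (Omega : measurableType dO) (P : probability Omega R)
    (mu nu : set (Vec R d) -> \bar R) (X Y : Omega -> Vec R d) (b : R) :
  measurable_fun setT X -> measurable_fun setT Y ->
  (forall A, measurable A -> P (X @^-1` A) = mu A) ->
  (forall A, measurable A -> P (Y @^-1` A) = nu A) ->
  (forall om, vdist (X om) (Y om) <= b) ->
  (W_infty mu nu <= b%:E)%E.
Proof.
move=> mX mY lawX lawY XY_le.
pose g := distribution P (mfun_of (measurable_fun_pair mX mY)).
have g_coupling : is_coupling mu nu g.
  move=> A mA; rewrite -lawX // -lawY //; split; congr (P _).
    by apply/seteqP; split => om /=; [case | move=> ?; split].
  by apply/seteqP; split => om /=; [case | move=> ?; split].
apply: le_trans (ereal_inf_lbound _) _; first by exists g.
pose far := [set z : Vec R d * Vec R d | b < vdist z.1 z.2].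
have m_far : measurable far.
  have mdist : measurable_fun setT (fun z : Vec R d * Vec R d => vdist z.1 z.2).
    exact: measurable_fun_continuous2 (@continuous2_vdist R d) measurable_fst measurable_snd.
  rewrite (_ : far = setT `&` (fun z => vdist z.1 z.2) @^-1` `]b, +oo[%classic).
    by apply: mdist => //; exact: measurable_itv.
  by apply/seteqP; split => z /=; rewrite in_itv /= andbT; [move=> ?; split | case].
apply/ess_supP; exists far; split => //.
  change (P ((fun om => (X om, Y om)) @^-1` far) = 0%E).
  rewrite (_ : _ @^-1` far = set0) ?measure0 //.
  by apply/seteqP; split => om //; rewrite /far /= ltNge XY_le.
by move=> z /= /negP; rewrite lee_fin -ltNge.
Qed.

Unset Implicit Arguments. Set Strict Implicit. Set Printing Implicit Defensive.

Theorem mainTheorem10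
  (R : realType) (d n : nat) (X : Type)
  (Kset : set (Vec R d)) (D : R) (proj : Vec R d -> Vec R d)
  (loss : X -> Vec R d -> R) (grad : X -> Vec R d -> Vec R d)
  (data data' : 'I_n -> X)
  (L lam eta C sigma : R)
  (dO : measure_display) (Omega : measurableType dO) (P : probability Omega R)
  (G G' : nat -> Omega -> Vec R d) (w0 : Vec R d) :
  Kset !=set0 -> closed_vset Kset -> convex_vset Kset -> is_diameter Kset D ->
  (forall x, is_proj Kset x (proj x)) ->
  (forall (z : X) (w : Vec R d), Kset w -> has_gradient_at (loss z) w (grad z w)) ->
  (exists j : 'I_n, data j <> data' j /\ forall i, i != j -> data i = data' i) ->
  0 <= L -> 0 < lam <= 1 ->
  (forall i : 'I_n, holder_on Kset L lam (grad (data i)) /\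
                    holder_on Kset L lam (grad (data' i))) ->
  0 < eta -> 0 < C -> 0 < sigma ->
  iid_gaussian_noise P sigma G -> iid_gaussian_noise P sigma G' ->
  forall t : nat,
    (W_infty
       (pushforward P (noisy_sgd proj (fun i => grad (data i)) eta C G w0 t))
       (pushforward P (noisy_sgd proj (fun i => grad (data' i)) eta C G' w0 t))
     <= (Num.min (Dseq lam eta L C n t) D)%:E)%E.
Proof.
move=> [k Kk] _ cK [diam_le _] proj_K _ [j [_ data_eq]] L_ge0 /andP[lam_gt0 _] holder
  eta_gt0 C_gt0 _ iidG iidG' t.
have [eta_ge0 C_ge0] := (ltW eta_gt0, ltW C_gt0).
have mG := iid_gaussian_noise_measurable iidG.
have holder1 i := (holder i).1; have holder2 i := (holder i).2.
apply: (W_infty_le_pointwise (X := noisy_sgd proj (fun i => grad (data i)) eta C G w0 t)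
                             (Y := noisy_sgd proj (fun i => grad (data' i)) eta C G w0 t)).
- by apply: (measurable_noisy_sgd cK proj_K holder1).
- by apply: (measurable_noisy_sgd cK proj_K holder2).
- by [].
- move=> A mA.
  by rewrite (noisy_sgd_law_eq cK proj_K holder2 L_ge0 lam_gt0 eta_ge0 C_ge0 w0 t iidG iidG' mA).
have grad_eq i : i != j -> grad (data i) = grad (data' i) by move/data_eq ->.
move=> om; rewrite le_min (vdist_noisy_sgd_le_Dseq cK proj_K grad_eq holder1) //=.
case: t => [|t]; first by rewrite vdistxx -(vdistxx k) diam_le.
by rewrite !noisy_sgdS; apply: diam_le; apply: (sgd_step_in _ _ proj_K).
Qed.
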